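(* In the setting below, suppose $p,q\geq5$. Then for all distinct $i,j,k\in\mathbb Z/N\mathbb Z$ we have $P_{ij}\cap Q_{jk}=\emptyset$.
   Context: Setting: $p,q$ distinct primes, $N=p+q$; $M=(m_{ik})_{i,k\in\mathbb Z/N\mathbb Z}$ has entries in $\mathbb Z/pq\mathbb Z$ and $(e^{2\pi i\,m_{ik}/pq})$ is a complex Hadamard matrix (unimodular entries, orthogonal rows). $L_i(k)=m_{ik}$, $L_{ij}=L_j-L_i$. For $d\mid pq$, $d(\mathbb Z/pq\mathbb Z)$ is the subgroup of multiples of $d$. For distinct $i,j$ there is a partition $\mathbb Z/N\mathbb Z=P_{ij}\sqcup Q_{ij}\sqcup R_{ij}$ and $r\in\mathbb Z/pq\mathbb Z$ with: $\#R_{ij}=2$ and $L_{ij}\equiv r$ on $R_{ij}$; $\#P_{ij}=p-1$ and $L_{ij}(P_{ij})=(r+q(\mathbb Z/pq\mathbb Z))\setminus\{r\}$; $\#Q_{ij}=q-1$ and $L_{ij}(Q_{ij})=(r+p(\mathbb Z/pq\mathbb Z))\setminus\{r\}$. This partition is unique ($R_{ij}$ is the pair of indices where $L_{ij}$ takes its unique repeated value). Put $P^+_{ij}=P_{ij}\cup R_{ij}$, $Q^+_{ij}=Q_{ij}\cup R_{ij}$. *)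

From HB Require Import structures.
From mathcomp Require Import all_boot all_order all_algebra.
From mathcomp Require Import algC.
Set Implicit Arguments. Unset Strict Implicit. Unset Printing Implicit Defensive.
Import Order.TTheory GRing.Theory Num.Theory.
Local Open Scope ring_scope.

Definition multiples (n d : nat) : {set 'Z_n} := [set y *+ d | y : 'Z_n].

(* Complex Hadamard condition for the matrix (z^(m_ik)), z a primitive
   (p q)-th root of unity: entries unimodular automatically; rows orthogonal
   w.r.t. the Hermitian inner product. *)
Definition hadamard_exp (N n : nat) (z : algC) (M : 'M['Z_n]_N) : Prop :=
  forall i j : 'I_N, i != j ->
    \sum_(k < N) z ^+ (val (M i k)) * (z ^+ (val (M j k)))^* = 0.

Definition Ldiff (N n : nat) (M : 'M['Z_n]_N) (i j : 'I_N) (k : 'I_N) : 'Z_n :=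
  M j k - M i k.

Definition is_PQR (p q : nat) (M : 'M['Z_(p * q)]_(p + q)) (i j : 'I_(p + q))
    (P Q R : {set 'I_(p + q)}) (r : 'Z_(p * q)) : Prop :=
  [/\ [/\ [disjoint P & Q], [disjoint P & R] & [disjoint Q & R]],
      P :|: Q :|: R = [set: 'I_(p + q)],
      (#|R| = 2%N /\ (forall k, k \in R -> Ldiff M i j k = r)),
      (#|P| = p.-1 /\ Ldiff M i j @: P = [set r + x | x in multiples (p * q) q] :\ r) &
      (#|Q| = q.-1 /\ Ldiff M i j @: Q = [set r + x | x in multiples (p * q) p] :\ r)].

(* By orthogonality of rows i and k, the p + q differences
   L_ik(x) = L_ij(x) + L_jk(x) are the exponents of a vanishing sum of
   (p q)-th roots of unity.  Counting the exponents by their residues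
   (u, v) in Z/p x Z/q, Fourier inversion and Galois conjugation give the
   rectangle rule c(u,v) + c(u',v') = c(u,v') + c(u',v), and a de Bruijn
   type counting argument then shows that the residues form a "cross":
   every x has residue u0 mod p or v0 mod q, and off the centre each
   residue class is hit at most once.  The partitions of (i, j) and (j, k)
   describe the residues of L_ij and L_jk; a purely combinatorial argument
   in an arbitrary Z-module (sizes |P_ij|, |Q_jk| >= 4) shows that such a
   cross forces P_ij and Q_jk to be disjoint. *)

From HB Require Import structures.
From mathcomp Require Import all_boot all_order all_algebra.
From mathcomp Require Import algC cyclotomic zify.
Import Order.TTheory GRing.Theory Num.Theory.
Local Open Scope ring_scope.

(* The reduction modulo m of a residue class modulo n; it is a well-defined
   additive map when m divides n. *)
Definition resid {n : nat} (m : nat) (a : 'Z_n) : 'Z_m := (a : nat)%:R.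

Section Residues.

Context {n m : nat}.
Hypotheses (n_gt1 : (1 < n)%N) (m_gt1 : (1 < m)%N) (m_dvd_n : (m %| n)%N).

Lemma val_Zp_lt (a : 'Z_n) : (a < n)%N.
Proof. by have := ltn_ord a; rewrite [X in (_ < X)%N -> _]Zp_cast. Qed.

Lemma resid_natr (k : nat) : resid m (k%:R : 'Z_n) = k%:R.
Proof.
by rewrite /resid (val_Zp_nat n_gt1) -(Zp_nat_mod m_gt1) modn_dvdm // Zp_nat_mod.
Qed.

Lemma resid_eqE (a b : 'Z_n) :
  (resid m a == resid m b) = (a == b %[mod m])%N.
Proof. by rewrite -val_eqE /resid /= !val_Zp_nat. Qed.

Lemma residD (a b : 'Z_n) : resid m (a + b) = resid m a + resid m b.
Proof.
apply/eqP; rewrite /resid -natrD -val_eqE /= !val_Zp_nat //.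
by rewrite modn_dvdm // Zp_cast.
Qed.

Lemma resid_mulrn (a : 'Z_n) (k : nat) : resid m (a *+ k) = resid m a *+ k.
Proof.
elim: k => [|k IHk]; first by rewrite !mulr0n.
by rewrite !mulrS residD IHk.
Qed.

Lemma resid_mulrn_mod (a : 'Z_n) : resid m (a *+ m) = 0.
Proof. by rewrite resid_mulrn -mulr_natr pchar_Zp // mulr0. Qed.

End Residues.

Section ChineseRemainder.

Context {p q : nat}.
Hypotheses (p_gt1 : (1 < p)%N) (q_gt1 : (1 < q)%N) (coprime_pq : coprime p q).

Let pq_gt1 : (1 < p * q)%N. Proof. by rewrite (ltn_trans p_gt1) // ltn_Pmulr // ltnW. Qed.
Let p_dvd_pq : (p %| p * q)%N. Proof. exact: dvdn_mulr. Qed.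
Let q_dvd_pq : (q %| p * q)%N. Proof. exact: dvdn_mull. Qed.

Lemma resid_crt_inj (a b : 'Z_(p * q)) :
  resid p a = resid p b -> resid q a = resid q b -> a = b.
Proof.
move=> /eqP + /eqP; rewrite !resid_eqE // => ab_p ab_q.
apply: ord_inj; apply/eqP; rewrite -(modn_small (val_Zp_lt pq_gt1 a)).
by rewrite -(modn_small (val_Zp_lt pq_gt1 b)) chinese_remainder // ab_p ab_q.
Qed.

Lemma resid_crt_surj (u : 'Z_p) (v : 'Z_q) :
  exists y : 'Z_(p * q), resid p y = u /\ resid q y = v.
Proof.
exists (chinese p q u v)%:R; rewrite !resid_natr //.
by split; rewrite -[RHS]natr_Zp; apply/eqP; rewrite -val_eqE /= !val_Zp_nat //
  ?chinese_modl ?chinese_modr.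
Qed.

End ChineseRemainder.

Section RootsOfUnity.

Context {n : nat} {z : algC}.
Hypothesis hz : n.-primitive_root z.

Let n_gt0 : (0 < n)%N. Proof. exact: prim_order_gt0 hz. Qed.

Lemma prim_root_mul_conj : z * z^* = 1.
Proof.
have z_norm1 : `|z| = 1.
  apply/eqP; rewrite -(pexpr_eq1 n_gt0) // -normrX (prim_expr_order hz).
  by rewrite normr1.
by rewrite -normCK z_norm1 expr1n.
Qed.

Lemma prim_expr_ZpD (a b : 'Z_n) :
  (1 < n)%N -> z ^+ (a + b)%R = z ^+ a * z ^+ b.
Proof.
move=> n_gt1; rewrite -exprD; apply/eqP; rewrite (eq_prim_root_expr hz) /=.
by rewrite modn_dvdm // Zp_cast.
Qed.

Lemma prim_root_expr_conj (a b : 'Z_n) :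
  (1 < n)%N -> z ^+ a * (z ^+ b)^* = z ^+ ((a - b)%R : 'Z_n).
Proof.
move=> n_gt1; have a_eq : z ^+ a = z ^+ ((a - b)%R : 'Z_n) * z ^+ b.
  by rewrite -prim_expr_ZpD // subrK.
by rewrite a_eq -mulrA rmorphXn -exprMn prim_root_mul_conj expr1n mulr1.
Qed.

(* Galois conjugation z |-> z^t (t coprime to n) preserves vanishing sums:
   z^t is a root of every rational polynomial vanishing at z. *)
Lemma vanishing_sum_coprime (I : finType) (e : I -> nat) :
  \sum_x z ^+ e x = 0 -> forall t, coprime t n -> \sum_x (z ^+ t) ^+ e x = 0.
Proof.
move=> hs t t_cop; pose P : {poly rat} := \sum_x 'X^(e x).
have evalP (w : algC) : (map_poly ratr P).[w] = \sum_x w ^+ e x.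
  rewrite /P rmorph_sum horner_sum; apply: eq_bigr => x _.
  by rewrite rmorphXn /= map_polyX hornerXn.
have [pz [Dpz _] minP] := minCpolyP z.
have pz_dvd : map_poly ratr pz %| map_poly (ratr : rat -> algC) P.
  by rewrite dvdp_map -minP /root evalP hs.
have zt_root : root (map_poly ratr pz) (z ^+ t).
  by rewrite -Dpz (minCpoly_cyclotomic hz) (root_cyclotomic hz) prim_root_exp_coprime.
by apply/eqP; rewrite -evalP; exact: root_dvdp pz_dvd zt_root.
Qed.

Lemma prim_root_orthogonality (a b : 'Z_n) :
  (1 < n)%N -> \sum_(t < n) (z ^+ a / z ^+ b) ^+ t = ((a == b) * n)%:R.
Proof.
move=> n_gt1; have zexp_neq0 (c : nat) : z ^+ c != 0.
  by rewrite expf_neq0 // (prim_root_eq0 hz) -lt0n.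
have [<-|a_neq_b] := eqVneq a b.
  rewrite divff // mul1n; under eq_bigr do rewrite expr1n.
  by rewrite sumr_const card_ord.
set w := z ^+ a / z ^+ b; have w_neq1 : w != 1.
  rewrite /w (can2_eq (divfK (zexp_neq0 _)) (mulfK (zexp_neq0 _))) mul1r (eq_prim_root_expr hz).
  by rewrite !modn_small ?val_Zp_lt.
have wn : w ^+ n = 1.
  by rewrite /w expr_div_n -!exprM !(mulnC _ n) !exprM (prim_expr_order hz) !expr1n divr1.
have /eqP := subrX1 w n; rewrite wn subrr eq_sym mulf_eq0 subr_eq0 (negbTE w_neq1).
by rewrite mul0n => /eqP.
Qed.

Lemma fiber_card_fourier (I : finType) (e : I -> 'Z_n) (y : 'Z_n) :
  (1 < n)%N ->
  \sum_(t < n) \sum_x (z ^+ e x / z ^+ y) ^+ t = (#|[set x | e x == y]| * n)%:R.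
Proof.
move=> n_gt1; rewrite exchange_big /=.
rewrite (eq_bigr (fun x => ((e x == y) * n)%:R)) => [|x _];
  last exact: prim_root_orthogonality.
rewrite -natr_sum -big_distrl /= -sum1dep_card [in RHS]big_mkcond.
by congr (_ * _)%:R; apply: eq_bigr => x _; case: eqP.
Qed.

End RootsOfUnity.

Lemma rectangle_cross (U V : finType) (c : U -> V -> nat) :
  coprime #|U| #|V| -> (1 < #|U|)%N -> (1 < #|V|)%N ->
  (forall u u' v v', c u v + c u' v' = c u v' + c u' v)%N ->
  (\sum_u \sum_v c u v = #|U| + #|V|)%N ->
  exists u0 v0, forall u v, c u v = ((u == u0) + (v == v0))%N.
Proof.
set a := #|U|; set b := #|V| => cop_ab a_gt1 b_gt1 rect total.
have not_dvd m k : coprime m k -> (1 < m)%N -> ~~ (m %| k)%N.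
  by move=> /eqP cop m_gt1; apply: contraL m_gt1 => /gcdn_idPl; rewrite cop => <-.
have /card_gt0P [u' _] : (0 < #|U|)%N by rewrite ltnW.
have /card_gt0P [v' _] : (0 < #|V|)%N by rewrite ltnW.
(* Normalise c at a minimal entry (u1, v1): then c u v = al u + be v. *)
have [v1 _ min_v1] := @arg_minnP _ v' predT (c u') isT.
have min_col u v : (c u v1 <= c u v)%N.
  by have := rect u u' v1 v; have := min_v1 v isT; lia.
have [u1 _ min_u1] := @arg_minnP _ u' predT (c^~ v1) isT.
have min_row u v : (c u1 v <= c u v)%N.
  by have := rect u1 u v1 v; have := min_u1 u isT; lia.
pose g := c u1 v1; pose al u := (c u v1 - g)%N; pose be v := (c u1 v - g)%N.
have c_split u v : c u v = (al u + be v + g)%N.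
  have := rect u u1 v v1; have := min_col u1 v; have := min_row u v1.
  rewrite /al /be /g; lia.
have mass : (b * (\sum_u al u) + a * (\sum_v be v) + a * b * g = a + b)%N.
  rewrite -total; under [RHS]eq_bigr do under eq_bigr do rewrite c_split.
  under [RHS]eq_bigr do rewrite !big_split /= !sum_nat_const.
  by rewrite !big_split /= !sum_nat_const -big_distrr /= -/a -/b mulnA.
set A := (\sum_u al u)%N in mass; set B := (\sum_v be v)%N in mass.
(* As a, b > 1 are coprime, a b > a + b, so the constant part g is 0. *)
have g0 : g = 0%N.
  have : (2 < a)%N || (2 < b)%N.
    move: cop_ab; apply: contraTT; rewrite negb_or -!leqNgt => /andP [? ?].
    have a2 : a = 2%N by lia.
    have b2 : b = 2%N by lia.
    by rewrite a2 b2.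
  have [//|g_gt0] := posnP g.
  have : (a * b <= a + b)%N.
    by rewrite -mass (leq_trans (leq_pmulr _ g_gt0)) // leq_addl.
  by move=> ab_le /orP [] ?; nia.
rewrite g0 muln0 addn0 in mass.
(* The totals A and B of al and be are 1: any other split of the mass
   a + b as b * A + a * B would force a | b or b | a. *)
have A1 : A = 1%N.
  case: (ltngtP A 1) => [A_lt1|A_gt1|//].
    have : (a %| a + b)%N.
      by rewrite -mass (_ : A = 0%N) ?muln0 ?add0n ?(dvdn_mulr _ (dvdnn a)) //; lia.
    by rewrite dvdn_addr // (negbTE (not_dvd _ _ cop_ab a_gt1)).
  have B0 : B = 0%N by nia.
  have : (b %| a + b)%N by rewrite -mass B0 muln0 addn0 dvdn_mulr.
  by rewrite dvdn_addl // (negbTE (not_dvd _ _ _ b_gt1)) // coprime_sym.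
have B1 : B = 1%N by rewrite A1 in mass; nia.
move/eqP/sum_nat_eq1: A1 => [u0 [_ al_u0 al_0]].
move/eqP/sum_nat_eq1: B1 => [v0 [_ be_v0 be_0]].
exists u0, v0 => u v; rewrite c_split g0 addn0.
by congr (_ + _)%N; [case: eqVneq => [->|/al_0->] | case: eqVneq => [->|/be_0->]].
Qed.

Lemma prim_expr_resid {n m d t : nat} {z : algC} {a b : 'Z_n} :
  n.-primitive_root z -> (1 < m)%N -> n = (m * d)%N -> (d %| t)%N ->
  resid m a = resid m b -> (z ^+ a) ^+ t = (z ^+ b) ^+ t.
Proof.
move=> hz m_gt1 n_md /dvdnP [s ->] /eqP.
have d_gt0 : (0 < d)%N by move: (prim_order_gt0 hz); rewrite n_md muln_gt0 => /andP [].
have n_gt1 : (1 < n)%N by rewrite n_md (leq_trans m_gt1) // leq_pmulr.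
rewrite resid_eqE // ?n_md ?dvdn_mulr // => ab_m.
rewrite -!exprM; apply/eqP; rewrite (eq_prim_root_expr hz).
move: (a : nat) (b : nat) ab_m => {}a {}b /eqP ab_m.
by rewrite n_md !mulnA -!muln_modl // -modnMml ab_m modnMml.
Qed.

Section VanishingSumsPQ.

(* A vanishing sum of p + q (p q)-th roots of unity, p and q distinct primes,
   is the sum of a full coset of the p-th roots and a full coset of the q-th
   roots sharing one point: the exponents form a "cross" in Z/p x Z/q. *)
Context {p q : nat} {z : algC}.
Hypotheses (pp : prime p) (pq : prime q) (p_neq_q : p != q).
Hypothesis hz : (p * q).-primitive_root z.
Context {I : finType} {e : I -> 'Z_(p * q)}.
Hypothesis e_vanish : \sum_x z ^+ e x = 0.

Let p_gt1 : (1 < p)%N. Proof. exact: prime_gt1. Qed.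
Let q_gt1 : (1 < q)%N. Proof. exact: prime_gt1. Qed.
Let coprime_pq : coprime p q. Proof. by rewrite prime_coprime // dvdn_prime2. Qed.
Let pq_gt1 : (1 < p * q)%N. Proof. by rewrite (ltn_trans p_gt1) // ltn_Pmulr // ltnW. Qed.
Let card_Zp_p : #|'Z_p| = p. Proof. by rewrite card_ord Zp_cast. Qed.
Let card_Zp_q : #|'Z_q| = q. Proof. by rewrite card_ord Zp_cast. Qed.

(* The rectangle rule for fibers of e: it comes from Fourier inversion, as the
   characters of exponent t cancel for t coprime to pq (Galois conjugation)
   and only see one coordinate of Z/p x Z/q otherwise. *)
Lemma fiber_rectangle (y1 y2 y3 y4 : 'Z_(p * q)) :
  resid p y1 = resid p y2 -> resid p y3 = resid p y4 ->
  resid q y1 = resid q y3 -> resid q y2 = resid q y4 ->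
  (#|[set x | e x == y1]| + #|[set x | e x == y4]| =
   #|[set x | e x == y2]| + #|[set x | e x == y3]|)%N.
Proof.
move=> y12 y34 y13 y24; apply/eqP; rewrite -(eqn_pmul2r (ltnW pq_gt1)) -(eqr_nat algC).
rewrite !mulnDl !natrD -!(fiber_card_fourier hz) // -!big_split /=.
apply/eqP/eq_bigr => t _; set S := \sum_x (z ^+ t) ^+ e x.
have shift (y : 'Z_(p * q)) : \sum_x (z ^+ e x / z ^+ y) ^+ t = S / (z ^+ y) ^+ t.
  by rewrite mulr_suml; apply: eq_bigr => x _; rewrite expr_div_n -!exprM mulnC.
rewrite !shift; have [t_cop|] := boolP (coprime t (p * q)).
  by rewrite /S (vanishing_sum_coprime hz _ _ e_vanish _ t_cop) !mul0r.
rewrite coprimeMr !(coprime_sym t) !prime_coprime // negb_and !negbK.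
case/orP => [p_dvd_t|q_dvd_t].
  rewrite (prim_expr_resid hz q_gt1 (mulnC p q) p_dvd_t y13).
  by rewrite (prim_expr_resid hz q_gt1 (mulnC p q) p_dvd_t y24) addrC.
rewrite (prim_expr_resid hz p_gt1 (erefl _) q_dvd_t y12).
by rewrite (prim_expr_resid hz p_gt1 (erefl _) q_dvd_t y34).
Qed.

Definition cross_count (u : 'Z_p) (v : 'Z_q) : nat :=
  #|[set x | (resid p (e x) == u) && (resid q (e x) == v)]|.

Lemma cross_count_fiber (y : 'Z_(p * q)) :
  cross_count (resid p y) (resid q y) = #|[set x | e x == y]|.
Proof.
apply: eq_card => x; rewrite !inE.
by apply/andP/eqP => [[/eqP ? /eqP ?]|->]; [exact: resid_crt_inj | rewrite !eqxx].
Qed.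

Lemma cross_count_rectangle u u' v v' :
  (cross_count u v + cross_count u' v' = cross_count u v' + cross_count u' v)%N.
Proof.
have [y1 [<- <-]] := resid_crt_surj p_gt1 q_gt1 coprime_pq u v.
have [y4 [<- <-]] := resid_crt_surj p_gt1 q_gt1 coprime_pq u' v'.
have [y2 [y2p y2q]] := resid_crt_surj p_gt1 q_gt1 coprime_pq (resid p y1) (resid q y4).
have [y3 [y3p y3q]] := resid_crt_surj p_gt1 q_gt1 coprime_pq (resid p y4) (resid q y1).
rewrite !cross_count_fiber -[in RHS]y2p -[in RHS]y2q -[in RHS]y3p -[in RHS]y3q.
by rewrite !cross_count_fiber; apply: fiber_rectangle.
Qed.

Lemma cross_count_total : (\sum_u \sum_v cross_count u v = #|I|)%N.
Proof.
rewrite pair_big /= -sum1_card (partition_big (fun x => (resid p (e x), resid q (e x))) xpredT) //=.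
apply: eq_bigr => -[u v] _; rewrite /cross_count sum1dep_card /=.
by apply: eq_card => x; rewrite !inE.
Qed.

Lemma vanishing_sum_cross : #|I| = (p + q)%N ->
  exists (u : 'Z_p) (v : 'Z_q),
  [/\ forall x, resid p (e x) = u \/ resid q (e x) = v,
      forall x y, resid p (e x) = resid p (e y) -> resid p (e x) != u -> x = y &
      forall x y, resid q (e x) = resid q (e y) -> resid q (e x) != v -> x = y].
Proof.
move=> card_I; have [u [v cross]] : exists u v, forall u' v',
    cross_count u' v' = ((u' == u) + (v' == v))%N.
  apply: rectangle_cross; rewrite ?card_Zp_p ?card_Zp_q //.
    exact: cross_count_rectangle.
  by rewrite cross_count_total.
have in_cross x : (0 < cross_count (resid p (e x)) (resid q (e x)))%N.
  by apply/card_gt0P; exists x; rewrite inE !eqxx.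
have cover x : resid p (e x) = u \/ resid q (e x) = v.
  by move: (in_cross x); rewrite cross; do 2 case: eqP => ?; auto.
have single u' v' x y : cross_count u' v' = 1%N ->
    resid p (e x) = u' -> resid q (e x) = v' ->
    resid p (e y) = u' -> resid q (e y) = v' -> x = y.
  move=> /eqP; rewrite eqn_leq => /andP [/card_le1_eqP uniq _] xu xv yu yv.
  by apply: uniq; rewrite inE ?xu ?xv ?yu ?yv !eqxx.
exists u, v; split => // x y xy_res x_off.
  have [xu|xv] := cover x; first by rewrite xu eqxx in x_off.
  have [yu|yv] := cover y; first by rewrite xy_res yu eqxx in x_off.
  apply: (single (resid p (e x)) v x y) => //.
  by rewrite cross (negbTE x_off) eqxx.
have [xu|xv] := cover x; last by rewrite xv eqxx in x_off.
have [yu|yv] := cover y; last by rewrite xy_res yv eqxx in x_off.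
apply: (single u (resid q (e x)) x y) => //.
by rewrite cross (negbTE x_off) eqxx.
Qed.

End VanishingSumsPQ.

Lemma card_multiples {n a d : nat} :
  n = (a * d)%N -> (1 < n)%N -> (a <= #|multiples n d|)%N.
Proof.
move=> n_ad n_gt1; have d_gt0 : (0 < d)%N by case: d n_ad n_gt1 => [|//] ->; rewrite muln0.
pose phi (k : 'I_a) : 'Z_n := (k%:R : 'Z_n) *+ d.
have phi_val (k : 'I_a) : phi k = (k * d)%N :> nat.
  by rewrite /phi -mulrnA val_Zp_nat // modn_small // n_ad ltn_pmul2r.
have phi_inj : injective phi.
  by move=> k k' /(congr1 val); rewrite /= !phi_val => /eqP; rewrite eqn_pmul2r // => /eqP/val_inj.
rewrite -[X in (X <= _)%N]card_ord -(card_imset _ phi_inj); apply/subset_leq_card/subsetP.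
by move=> _ /imsetP [k _ ->]; apply/imsetP; exists k%:R.
Qed.

Lemma punctured_coset_facts (n d e : nat) (T : finType) (f : T -> 'Z_n)
    (P : {set T}) (r : 'Z_n) :
  n = (d * e)%N -> coprime d e -> (1 < d)%N -> (1 < e)%N ->
  f @: P = [set r + x | x in multiples n e] :\ r -> #|P| = d.-1 ->
  [/\ {in P, forall x, resid e (f x) = resid e r},
      {in P, forall x, resid d (f x) != resid d r} &
      {in P &, injective (fun x => resid d (f x))}].
Proof.
move=> n_de cop_de d_gt1 e_gt1 fP card_P; subst n.
have n_gt1 : (1 < d * e)%N by rewrite (ltn_trans d_gt1) // ltn_Pmulr // ltnW.
have mem_fP x : x \in P -> f x != r /\ exists y, f x = r + y *+ e.
  move=> xP; have : f x \in f @: P by rewrite imset_f.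
  by rewrite fP in_setD1 => /andP [-> /imsetP [_ /imsetP [y _ ->] ->]]; split; last exists y.
have res_e : {in P, forall x, resid e (f x) = resid e r}.
  move=> x /mem_fP [_ [y ->]].
  by rewrite residD ?dvdn_mull // resid_mulrn_mod ?dvdn_mull // addr0.
have f_inj : {in P &, injective f}.
  apply/imset_injP; rewrite eqn_leq leq_imset_card /= fP card_P.
  set C := [set r + x | x in multiples (d * e) e].
  have r_in_C : r \in C.
    by apply/imsetP; exists 0; rewrite ?addr0 //; apply/imsetP; exists 0; rewrite ?mul0rn.
  have card_C : #|C| = #|multiples (d * e) e| := card_imset _ (addrI r).
  rewrite -subn1 leq_subLR -[X in (_ <= X)%N]/(true + #|C :\ r|)%N -r_in_C -cardsD1.
  by rewrite card_C card_multiples.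
split=> // [x xP|x y xP yP res_d].
  apply: contra (proj1 (mem_fP x xP)) => /eqP res_d; apply/eqP.
  exact: (resid_crt_inj d_gt1 e_gt1 cop_de _ _ res_d (res_e x xP)).
apply: f_inj => //; apply: (resid_crt_inj d_gt1 e_gt1 cop_de _ _ res_d).
by rewrite !res_e.
Qed.

Section PartitionResidues.

Context {p q : nat}.
Hypotheses (pp : prime p) (pq : prime q) (p_neq_q : p != q).
Context {M : 'M['Z_(p * q)]_(p + q)} {i j : 'I_(p + q)}.
Context {P Q R : {set 'I_(p + q)}} {r : 'Z_(p * q)}.
Hypothesis hPQR : is_PQR M i j P Q R r.

Let p_gt1 : (1 < p)%N. Proof. exact: prime_gt1. Qed.
Let q_gt1 : (1 < q)%N. Proof. exact: prime_gt1. Qed.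
Let coprime_pq : coprime p q. Proof. by rewrite prime_coprime // dvdn_prime2. Qed.

Lemma PQR_P_facts :
  [/\ {in P, forall x, resid q (Ldiff M i j x) = resid q r},
      {in P, forall x, resid p (Ldiff M i j x) != resid p r} &
      {in P &, injective (fun x => resid p (Ldiff M i j x))}].
Proof.
case: hPQR => _ _ _ [card_P LP] _.
exact: punctured_coset_facts (erefl _) coprime_pq p_gt1 q_gt1 LP card_P.
Qed.

Lemma PQR_Q_facts :
  [/\ {in Q, forall x, resid p (Ldiff M i j x) = resid p r},
      {in Q, forall x, resid q (Ldiff M i j x) != resid q r} &
      {in Q &, injective (fun x => resid q (Ldiff M i j x))}].
Proof.
case: hPQR => _ _ _ _ [card_Q LQ]; have coprime_qp : coprime q p by rewrite coprime_sym.
exact: punctured_coset_facts (mulnC p q) coprime_qp q_gt1 p_gt1 LQ card_Q.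
Qed.

Lemma PQR_off_P x : x \notin P -> resid p (Ldiff M i j x) = resid p r.
Proof.
move=> x_notP; have [_ cover [_ LR] _ _] := hPQR; have [LQ _ _] := PQR_Q_facts.
have : x \in P :|: Q :|: R by rewrite cover inE.
by rewrite !inE (negbTE x_notP) => /orP [/LQ|/LR->].
Qed.

Lemma PQR_off_Q x : x \notin Q -> resid q (Ldiff M i j x) = resid q r.
Proof.
move=> x_notQ; have [_ cover [_ LR] _ _] := hPQR; have [LP _ _] := PQR_P_facts.
have : x \in P :|: Q :|: R by rewrite cover inE.
by rewrite !inE orbAC (negbTE x_notQ) orbF => /orP [/LP|/LR->].
Qed.

End PartitionResidues.

Section CrossAgainstPartition.

(* One residue coordinate of the key configuration: h = f + g in a Z-module,
   f is "injective off a" on A and equal to a off A, g is constant equal to b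
   on B, and h hits every value other than u at most once. *)
Context {T : finType} {V : zmodType} {f g h : T -> V} {A B : {set T}}.
Context {a b u : V}.
Hypothesis hE : forall x, h x = f x + g x.
Hypotheses (fA : {in A, forall x, f x != a}) (fA_inj : {in A &, injective f}).
Hypothesis f_offA : forall x, x \notin A -> f x = a.
Hypothesis gB : {in B, forall x, g x = b}.
Hypothesis h_inj : forall x y, h x = h y -> h x != u -> x = y.

(* On A :&: B, h = f + b is injective, so it takes the value u at most once. *)
Lemma inter_center_le1 : (#|[set x in A :&: B | h x == u]| <= 1)%N.
Proof.
apply/card_le1_eqP => x y; rewrite !inE !hE.
move=> /andP [/andP [xA xB] /eqP <-] /andP [/andP [yA yB]].
by rewrite gB // gB // => /eqP /addIr; apply: fA_inj.
Qed.

(* On B :\: A, h is the constant a + b; if B :\: A has two points this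
   constant must be the center u. *)
Lemma center_sum : (#|A :&: B| + 2 <= #|B|)%N -> a + b = u.
Proof.
move=> big_B; apply/eqP; apply: contraLR big_B => ab_neq_u.
have hBA x : x \in B :\: A -> h x = a + b.
  by rewrite inE => /andP [xA xB]; rewrite hE f_offA ?gB.
have : (#|B :\: A| <= 1)%N.
  by apply/card_le1_eqP => x y xBA yBA; apply: h_inj; rewrite !hBA.
by rewrite -ltnNge -(cardsID A B) setIC; lia.
Qed.

(* If u = a + b, the points of A :&: B avoid the center, as f /= a on A. *)
Lemma inter_off_center x : a + b = u -> x \in A :&: B -> h x != u.
Proof.
move=> <- /setIP [xA xB]; rewrite hE gB //.
by apply: contra (fA x xA) => /eqP /addIr ->.
Qed.

End CrossAgainstPartition.

Lemma cross_partition_disjoint {T : finType} {V1 V2 : zmodType}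
    {f1 g1 h1 : T -> V1} {f2 g2 h2 : T -> V2} {A B : {set T}}
    {a1 b1 u1 : V1} {a2 b2 u2 : V2} :
  (forall x, h1 x = f1 x + g1 x) -> (forall x, h2 x = f2 x + g2 x) ->
  {in A, forall x, f2 x = a2} -> {in A, forall x, f1 x != a1} ->
  {in A &, injective f1} -> (forall x, x \notin A -> f1 x = a1) ->
  {in B, forall x, g1 x = b1} -> {in B, forall x, g2 x != b2} ->
  {in B &, injective g2} -> (forall x, x \notin B -> g2 x = b2) ->
  (forall x, h1 x = u1 \/ h2 x = u2) ->
  (forall x y, h1 x = h1 y -> h1 x != u1 -> x = y) ->
  (forall x y, h2 x = h2 y -> h2 x != u2 -> x = y) ->
  (4 <= #|A|)%N -> (4 <= #|B|)%N ->
  A :&: B = set0.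
Proof.
move=> h1E h2E fA2 fA1 fA_inj f_offA gB1 gB2 gB_inj g_offB cover h1_inj h2_inj A4 B4.
have h2E' x : h2 x = g2 x + f2 x by rewrite addrC.
have inter_le2 : (#|A :&: B| <= 2)%N.
  have : A :&: B \subset [set x in A :&: B | h1 x == u1] :|: [set x in B :&: A | h2 x == u2].
    apply/subsetP => x /setIP [xA xB]; rewrite !inE xA xB /=.
    by case: (cover x) => ->; rewrite eqxx ?orbT.
  move/subset_leq_card/leq_trans; apply; rewrite (leq_trans (leq_card_setU _ _)) //.
  exact: leq_add (inter_center_le1 h1E fA_inj gB1) (inter_center_le1 h2E' gB_inj fA2).
have room (C : {set T}) : (4 <= #|C|)%N -> (#|A :&: B| + 2 <= #|C|)%N.
  by move=> C4; have := inter_le2; lia.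
have center1 := center_sum h1E f_offA gB1 h1_inj (room B B4).
have center2 : b2 + a2 = u2.
  by apply: (center_sum h2E' g_offB fA2 h2_inj); rewrite setIC room.
apply/eqP; apply: contraT => /set0Pn [x xAB].
have xBA : x \in B :&: A by rewrite setIC.
case: (cover x) => /eqP.
  by rewrite (negbTE (inter_off_center h1E fA1 gB1 x center1 xAB)).
by rewrite (negbTE (inter_off_center h2E' gB2 fA2 x center2 xBA)).
Qed.

Lemma hadamard_vanishing_sum {N n : nat} {z : algC} {M : 'M['Z_n]_N} {i k : 'I_N} :
  n.-primitive_root z -> (1 < n)%N -> hadamard_exp z M -> i != k ->
  \sum_x z ^+ Ldiff M i k x = 0.
Proof.
move=> hz n_gt1 hM ik; rewrite -[RHS](hM k i); last by rewrite eq_sym.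
by apply: eq_bigr => x _; rewrite prim_root_expr_conj.
Qed.

Lemma LdiffD {N n : nat} (M : 'M['Z_n]_N) (i j k x : 'I_N) :
  Ldiff M i k x = Ldiff M i j x + Ldiff M j k x.
Proof. by rewrite /Ldiff [RHS]addrC addrA subrK. Qed.

Theorem lemma6p6 (p q : nat) (pp : prime p) (pq : prime q) (neq : p != q)
    (p5 : (5 <= p)%N) (q5 : (5 <= q)%N)
    (z : algC) (hz : (p * q)%N.-primitive_root z)
    (M : 'M['Z_(p * q)]_(p + q)) (hM : hadamard_exp z M) :
  forall i j k : 'I_(p + q), i != j -> j != k -> i != k ->
  forall (P1 Q1 R1 : {set 'I_(p + q)}) (r1 : 'Z_(p * q)),
    is_PQR M i j P1 Q1 R1 r1 ->
  forall (P2 Q2 R2 : {set 'I_(p + q)}) (r2 : 'Z_(p * q)),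
    is_PQR M j k P2 Q2 R2 r2 ->
  P1 :&: Q2 = set0.
Proof.
move=> i j k _ _ ik P1 Q1 R1 r1 H1 P2 Q2 R2 r2 H2.
have [p_gt1 q_gt1] := (prime_gt1 pp, prime_gt1 pq).
have pq_gt1 : (1 < p * q)%N by rewrite (ltn_trans p_gt1) // ltn_Pmulr // ltnW.
have p_dvd : (p %| p * q)%N := dvdn_mulr q (dvdnn p).
have q_dvd : (q %| p * q)%N := dvdn_mull p (dvdnn q).
have [u [v [cover inj_p inj_q]]] := vanishing_sum_cross pp pq neq hz
  (hadamard_vanishing_sum hz pq_gt1 hM ik) (card_ord _).
have [P1q P1p P1_inj] := PQR_P_facts pp pq neq H1.
have [Q2p Q2q Q2_inj] := PQR_Q_facts pp pq neq H2.
have [card_P1 card_Q2] : #|P1| = p.-1 /\ #|Q2| = q.-1.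
  by case: H1 => _ _ _ [-> _] _; case: H2 => _ _ _ _ [-> _].
(* With |P1| = p - 1 >= 4 and |Q2| = q - 1 >= 4 the cross cannot meet both. *)
apply: (cross_partition_disjoint (h1 := fun x => resid p (Ldiff M i k x))
  (h2 := fun x => resid q (Ldiff M i k x))) P1q P1p P1_inj (PQR_off_P pp pq neq H1)
  Q2p Q2q Q2_inj (PQR_off_Q pp pq neq H2) cover inj_p inj_q _ _.
- by move=> x; rewrite (LdiffD M i j) residD.
- by move=> x; rewrite (LdiffD M i j) residD.
- by rewrite card_P1; lia.
- by rewrite card_Q2; lia.
Qed.
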